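(* Let $k_1<k_2$ be positive integers, $M\subseteq\mathbb{N}$ infinite and $\varphi:[M]^{k_1}\to[\mathbb{N}]^{k_2}$ any map. Then there exists an infinite $L\subseteq M$ such that for every plegma pair $(s_1,s_2)$ in $[L]^{k_1}$, neither $(\varphi(s_1),\varphi(s_2))$ nor $(\varphi(s_2),\varphi(s_1))$ is a plegma pair in $[\mathbb{N}]^{k_2}$. In particular there is no infinite $L\subseteq M$ such that $\varphi$ maps every plegma family in $[L]^{k_1}$ to a plegma family in $[\mathbb{N}]^{k_2}$.
   Context: $[M]^k$ is the set of $k$-element subsets of $M$, each $s$ identified with its increasing enumeration $s(1)<\dots<s(k)$. A finite sequence $(s_j)_{j=1}^l$ in $[M]^k$ is a plegma family if $s_1(i)<\dots<s_l(i)$ for every $1\le i\le k$ and $s_l(i)<s_1(i+1)$ for every $1\le i<k$; a plegma pair is a plegma family of length 2. *)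

From mathcomp Require Import all_boot.
Set Implicit Arguments. Unset Strict Implicit. Unset Printing Implicit Defensive.

Definition infinite_set (L : nat -> Prop) : Prop :=
  forall n : nat, exists m : nat, n <= m /\ L m.

Definition subset_of (L M : nat -> Prop) : Prop := forall x, L x -> M x.

(* [M]^k : a k-element subset of M, identified with its increasing
   enumeration s = [:: s(1); ...; s(k)] (0-based indices in Rocq). *)
Definition in_kset (M : nat -> Prop) (k : nat) (s : seq nat) : Prop :=
  [/\ sorted ltn s, size s = k & forall x, x \in s -> M x].

(* Plegma family (s_1,...,s_l), l >= 1, of k-element sets, as sequences:
   s_1(i) < ... < s_l(i) for each i, and s_l(i) < s_1(i+1) for i < k. *)
Definition plegma_family (k : nat) (F : seq (seq nat)) : Prop :=
  [/\ 0 < size F,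
      forall j i, j.+1 < size F -> i < k ->
        nth 0 (nth [::] F j) i < nth 0 (nth [::] F j.+1) i
    & forall i, i.+1 < k ->
        nth 0 (last [::] F) i < nth 0 (head [::] F) i.+1].

Definition plegma_pair (k : nat) (s t : seq nat) : Prop :=
  plegma_family k [:: s; t].

From mathcomp Require Import all_boot zify.
From Stdlib Require Import Classical ClassicalEpsilon.
Set Implicit Arguments. Unset Strict Implicit. Unset Printing Implicit Defensive.

(* Colour a 2k1-subset u of M by whether phi maps its even and odd parts
   (a plegma pair, and every plegma pair arises this way) to a plegma pair in
   either order, and take an infinite homogeneous L by Ramsey's theorem.
   L cannot have the "linked" colour: starting from one k1-set u0, build for
   each m <= K := phi(u0)(k1) (indices from 0) a chain of plegma pairs
   u0 = u_m^0, ..., u_m^k1. Across each linked link the entries of the images drop by one index and at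
   least one unit, so phi(u_m^k1)(0) < K. But for m < m' the last sets form a
   plegma pair, so these K + 1 heads are pairwise distinct: impossible. *)

Lemma dependent_choice (A : Type) (R : A -> A -> Prop) (a0 : A) :
  (forall a, exists b, R a b) ->
  exists f : nat -> A, f 0 = a0 /\ forall n, R (f n) (f n.+1).
Proof.
move=> total; pose next a := proj1_sig (constructive_indefinite_description _ (total a)).
exists (fun n => iter n next a0); split=> // n.
exact: proj2_sig (constructive_indefinite_description _ (total _)).
Qed.

Lemma bool_infinitely_often (f : nat -> bool) :
  exists b, forall N, exists2 n, N <= n & f n = b.
Proof.
case: (classic (forall N, exists2 n, N <= n & f n = true)) => [|/not_all_ex_not [N noT]].
  by exists true.
exists false => N'; exists (maxn N N'); first exact: leq_maxr.
apply/negbTE/negP => fT; apply: noT; exists (maxn N N') => //; exact: leq_maxl.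
Qed.

Lemma leq_id_incr (x : nat -> nat) : (forall n, x n < x n.+1) -> forall n, n <= x n.
Proof. by move=> x_incr; elim=> // n IHn; apply: leq_ltn_trans IHn (x_incr n). Qed.

Lemma infinite_set_gt (M : nat -> Prop) (a : nat) :
  infinite_set M -> infinite_set (fun y => M y /\ a < y).
Proof.
move=> infM n; have [y [le_y My]] := infM (maxn n a.+1).
by exists y; do !split => //; lia.
Qed.

Lemma infinite_set_enum (L : nat -> Prop) : infinite_set L ->
  exists x : nat -> nat, (forall n, L (x n)) /\ (forall n, x n < x n.+1).
Proof.
move=> infL; have [x0 [_ Lx0]] := infL 0.
have [x [x0E xS]] := dependent_choice (R := fun a b => a < b /\ L b) x0 (fun a => infL a.+1).
by exists x; split=> [[|n]|n]; rewrite ?x0E //; case: (xS n).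
Qed.

Lemma in_kset_sub (L L' : nat -> Prop) k s :
  subset_of L L' -> in_kset L k s -> in_kset L' k s.
Proof. by move=> LL' [sorted_s size_s Ls]; split=> // y /Ls /LL'. Qed.

Definition ramsey_step (c : seq nat -> Prop) (m : nat) (T : nat -> Prop)
    (a : nat) (b : bool) (T' : nat -> Prop) : Prop :=
  [/\ T a, subset_of T' T, (forall y, T' y -> a < y), infinite_set T'
    & forall s, in_kset T' m s -> (c (a :: s) <-> b)].

Section RamseyChain.
Variables (c : seq nat -> Prop) (m : nat) (a : nat -> nat) (b : nat -> bool).
Variable sets : nat -> nat -> Prop.
Hypothesis chain : forall n, ramsey_step c m (sets n) (a n) (b n) (sets n.+1).

Lemma ramsey_chain_subset n d : subset_of (sets (n + d)) (sets n).
Proof.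
elim: d => [|d IHd]; first by rewrite addn0.
by have [_ sub _ _ _] := chain (n + d); rewrite addnS => y /sub /IHd.
Qed.

Lemma ramsey_chain_incr n : a n < a n.+1.
Proof. by have [_ _ gt_a _ _] := chain n; have [? _ _ _ _] := chain n.+1; apply: gt_a. Qed.

Lemma ramsey_chain_mem n n' : n < n' -> sets n.+1 (a n').
Proof.
move=> lt_nn'; have [Sa _ _ _ _] := chain n'.
by move: (@ramsey_chain_subset n.+1 (n' - n.+1)); rewrite subnKC //; apply.
Qed.

Lemma ramsey_chain_homogeneous (b0 : bool) s :
  in_kset (fun y => exists2 n, b n = b0 & y = a n) m.+1 s -> (c s <-> b0).
Proof.
case: s => [|y rest] [sorted_s size_s inL] //.
have [n bn y_eq] := inL y (mem_head _ _); subst y.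
have a_mono := leqW_mono (leq_mono (homo_ltn ltn_trans ramsey_chain_incr)).
have rest_in : in_kset (sets n.+1) m rest.
  split; [exact: path_sorted sorted_s | by case: size_s |] => z z_rest.
  have [n' _ z_eq] : exists2 n', b n' = b0 & z = a n'.
    by apply: inL; rewrite inE z_rest orbT.
  have : a n < z := allP (order_path_min ltn_trans sorted_s) z z_rest.
  by rewrite z_eq a_mono; apply: ramsey_chain_mem.
by have [_ _ _ _ col] := chain n; rewrite -bn; apply: col.
Qed.

End RamseyChain.

Theorem ramsey (m : nat) (c : seq nat -> Prop) (M : nat -> Prop) :
  infinite_set M ->
  exists L (b : bool),
    [/\ subset_of L M, infinite_set L & forall s, in_kset L m s -> (c s <-> b)].
Proof.
elim: m c M => [|m IHm] c M infM.
  case: (classic (c [::])) => [c0|nc0]; [exists M, true | exists M, false];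
    by split=> // s [_ /size0nil -> _].
have step T : infinite_set T -> exists a b T', ramsey_step c m T a b T'.
  move=> infT; have [a [_ Ta]] := infT 0.
  have [T' [b [sub infT' col]]] := IHm (fun s => c (a :: s)) _ (infinite_set_gt a infT).
  by exists a, b, T'; split=> // y /sub [].
(* Vacuous on finite sets, so that the relation is total. *)
pose R (p q : nat * bool * (nat -> Prop)) :=
  infinite_set p.2 -> ramsey_step c m p.2 q.1.1 q.1.2 q.2.
have [f [f0 fS]] : exists f, f 0 = (0, true, M) /\ forall n, R (f n) (f n.+1).
  apply: dependent_choice => p.
  case: (classic (infinite_set p.2)) => [/step [a [b [T' st]]]|finp].
    by exists (a, b, T').
  by exists p.
have inf_f n : infinite_set (f n).2.
  by elim: n => [|n IHn]; [rewrite f0 | have [_ _ _ ? _] := fS n IHn].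
pose a n := (f n.+1).1.1; pose b n := (f n.+1).1.2; pose sets n := (f n).2.
have chain n : ramsey_step c m (sets n) (a n) (b n) (sets n.+1) := fS n (inf_f n).
have [b0 b0_often] := bool_infinitely_often b.
exists (fun y => exists2 n, b n = b0 & y = a n), b0; split.
- move=> _ [n _ ->]; have [Sa _ _ _ _] := chain n.
  by move: (ramsey_chain_subset chain (n := 0) (d := n)); rewrite add0n /sets f0; apply.
- move=> N; have [n le_Nn bn] := b0_often N; exists (a n); split; last by exists n.
  exact: leq_trans le_Nn (leq_id_incr (ramsey_chain_incr chain) n).
- exact: ramsey_chain_homogeneous chain b0.
Qed.

Lemma in_kset_mkseq (L : nat -> Prop) (x f : nat -> nat) k :
  (forall n, L (x n)) -> {homo x : i j / i < j} ->
  (forall i, i.+1 < k -> f i < f i.+1) -> in_kset L k (mkseq (x \o f) k).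
Proof.
move=> Lx x_mono f_incr; split; last 2 first.
- exact: size_mkseq.
- by move=> _ /mapP [i _ ->]; apply: Lx.
apply/(sortedP 0) => i; rewrite size_mkseq => lt_ik.
rewrite !nth_mkseq //; last exact: ltnW.
by apply: x_mono; apply: f_incr.
Qed.

Lemma plegma_pair_mkseq (x f g : nat -> nat) k : {homo x : i j / i < j} ->
  (forall i, i < k -> f i < g i) -> (forall i, i.+1 < k -> g i < f i.+1) ->
  plegma_pair k (mkseq (x \o f) k) (mkseq (x \o g) k).
Proof.
move=> x_mono fg gf; split=> // [[|j] i //= _ lt_ik | i lt_ik] /=.
  by rewrite !nth_mkseq //; apply: x_mono; apply: fg.
rewrite !nth_mkseq //; last exact: ltnW.
by apply: x_mono; apply: gf.
Qed.

Lemma exists_plegma_pair (L : nat -> Prop) k : infinite_set L ->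
  exists s t, [/\ in_kset L k s, in_kset L k t & plegma_pair k s t].
Proof.
move=> /infinite_set_enum [x [Lx x_incr]]; have x_mono := homo_ltn ltn_trans x_incr.
exists (mkseq (x \o double) k), (mkseq (x \o (fun i => i.*2.+1)) k).
by split; [apply: in_kset_mkseq .. | apply: plegma_pair_mkseq] => // i *; lia.
Qed.

Definition interleave k (s t : seq nat) :=
  mkseq (fun j => nth 0 (if odd j then t else s) j./2) k.*2.
Definition evens k (u : seq nat) := mkseq (fun i => nth 0 u i.*2) k.
Definition odds k (u : seq nat) := mkseq (fun i => nth 0 u i.*2.+1) k.

Lemma evens_interleave k s t : size s = k -> evens k (interleave k s t) = s.
Proof.
move=> size_s; apply: (@eq_from_nth _ 0); rewrite size_mkseq ?size_s // => i lt_ik.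
by rewrite !nth_mkseq ?ltn_double //= odd_double half_double.
Qed.

Lemma odds_interleave k s t : size t = k -> odds k (interleave k s t) = t.
Proof.
move=> size_t; apply: (@eq_from_nth _ 0); rewrite size_mkseq ?size_t // => i lt_ik.
by rewrite !nth_mkseq /= ?odd_double ?uphalf_double //; lia.
Qed.

Lemma interleave_in_kset (L : nat -> Prop) k s t :
  in_kset L k s -> in_kset L k t -> plegma_pair k s t ->
  in_kset L k.*2 (interleave k s t).
Proof.
move=> [_ size_s Ls] [_ size_t Lt] [_ st ts]; split; last 2 first.
- exact: size_mkseq.
- move=> y /mapP [j]; rewrite mem_iota add0n => /andP [_ lt_jk] ->.
  have lt_half : j./2 < k by rewrite ltn_half_double.
  by case: (odd j); [apply: Lt | apply: Ls]; apply: mem_nth; rewrite ?size_s ?size_t.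
apply/(sortedP 0) => j; rewrite size_mkseq => lt_jk.
have := odd_double_half j; rewrite !nth_mkseq //= ?uphalf_half; last exact: ltnW.
case: (odd j) => /= j_eq; first by apply: ts; lia.
by apply: (st 0) => //; lia.
Qed.

Definition plegma_linked k (P Q : seq nat) := plegma_pair k P Q \/ plegma_pair k Q P.

Lemma plegma_linked_shift k P Q : sorted ltn P -> size P = k ->
  plegma_linked k P Q -> forall i, i.+1 < k -> nth 0 Q i < nth 0 P i.+1.
Proof.
move=> sorted_P size_P [[_ _ PQ] | [_ QP _]] i lt_ik; first exact: PQ.
apply: ltn_trans (QP 0 i isT (ltnW lt_ik)) _.
by move/(sortedP 0): sorted_P; apply; rewrite size_P.
Qed.

Lemma plegma_linked_head_neq k P Q : 0 < k ->
  plegma_linked k P Q -> nth 0 P 0 != nth 0 Q 0.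
Proof.
move=> k_gt0 [[_ PQ _] | [_ QP _]].
  by rewrite ltn_eqF // (PQ 0 0 isT k_gt0).
by rewrite eq_sym ltn_eqF // (QP 0 0 isT k_gt0).
Qed.

(* In a linked pair, entry [i] of the second set lies below entry [i + 1] of
   the first, so every link costs one index and at least one unit. *)
Lemma plegma_linked_descent k (P : nat -> seq nat) r j :
  (forall n, n < r -> in_kset (fun _ => True) k (P n) /\ plegma_linked k (P n) (P n.+1)) ->
  r <= j -> j < k -> nth 0 (P r) (j - r) + r <= nth 0 (P 0) j.
Proof.
elim: r => [|r IHr] chain le_rj lt_jk; first by rewrite subn0 addn0.
have [[sorted_P size_P _] linked] := chain r (ltnSn r).
have := plegma_linked_shift sorted_P size_P linked (i := j - r.+1).
rewrite subnSK // => /(_ (leq_ltn_trans (leq_subr _ _) lt_jk)) step.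
apply: leq_trans (IHr (fun n lt_nr => chain n (ltnW lt_nr)) (ltnW le_rj) lt_jk).
by rewrite addnS -addSn leq_add2r.
Qed.

Lemma injective_bounded_leq N K (f : nat -> nat) :
  (forall m m', m < m' < N -> f m != f m') -> (forall m, m < N -> f m < K) -> N <= K.
Proof.
move=> f_inj f_lt; rewrite -(size_iota 0 N) -(size_map f) -(size_iota 0 K).
apply: uniq_leq_size.
  rewrite map_inj_in_uniq ?iota_uniq // => m m'; rewrite !mem_iota /= !add0n => ltm ltm' eqf.
  case: (ltngtP m m') => // lt.
    by have := f_inj m m'; rewrite lt ltm' eqf eqxx => /(_ isT).
  by have := f_inj m' m; rewrite lt ltm eqf eqxx => /(_ isT).
by move=> y /mapP [m]; rewrite !mem_iota /= !add0n => lt_mN ->; apply: f_lt.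
Qed.

Lemma lex_ltn N a b m m' : a < b -> m < N -> a * N + m < b * N + m'.
Proof. nia. Qed.

(* Index, in an enumeration of the ground set, of the [i]-th entry of the
   [r]-th set of the [m]-th chain in [not_all_plegma_linked]. Entries with
   [i + r < k] are shared by all chains; the others lie above them, ordered
   lexicographically by (i, r, m) for [m < N]. *)
Definition plegma_pos k N r i m :=
  if i + r < k then i * k.+1 + r else (k * k.+1 + i * k.+1 + r) * N + m.

Section PlegmaPositions.
Variables k N : nat.

Lemma small_pos_lt_large r i r' i' m : m < N -> i + r < k ->
  i * k.+1 + r < (k * k.+1 + i' * k.+1 + r') * N + m.
Proof. nia. Qed.

Lemma plegma_pos_ltS r i m : m < N -> r <= k -> i.+1 < k ->
  plegma_pos k N r i m < plegma_pos k N r i.+1 m.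
Proof.
move=> *; rewrite /plegma_pos; do 2 case: ifP => ?; try lia;
  by first [apply: small_pos_lt_large | apply: lex_ltn]; lia.
Qed.

Lemma plegma_pos_lt_succ r i m : m < N -> r < k -> i < k ->
  plegma_pos k N r i m < plegma_pos k N r.+1 i m.
Proof.
move=> *; rewrite /plegma_pos; do 2 case: ifP => ?; try lia;
  by first [apply: small_pos_lt_large | apply: lex_ltn]; lia.
Qed.

Lemma plegma_pos_succ_lt r i m : m < N -> r < k -> i.+1 < k ->
  plegma_pos k N r.+1 i m < plegma_pos k N r i.+1 m.
Proof.
move=> *; rewrite /plegma_pos; do 2 case: ifP => ?; try lia;
  by first [apply: small_pos_lt_large | apply: lex_ltn]; lia.
Qed.

Lemma plegma_pos_top_lt i m m' : m < m' ->
  plegma_pos k N k i m < plegma_pos k N k i m'.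
Proof. by move=> *; rewrite /plegma_pos; case: ifP => ?; lia. Qed.

Lemma plegma_pos_top_ltS i m m' : m' < N -> i.+1 < k ->
  plegma_pos k N k i m' < plegma_pos k N k i.+1 m.
Proof. by move=> *; rewrite /plegma_pos; do 2 case: ifP => ?; try lia; apply: lex_ltn; lia. Qed.

End PlegmaPositions.

Lemma not_all_plegma_linked k1 k2 (L : nat -> Prop) (phi : seq nat -> seq nat) :
  0 < k1 -> k1 < k2 -> infinite_set L ->
  (forall s, in_kset L k1 s -> in_kset (fun _ => True) k2 (phi s)) ->
  ~ (forall s1 s2, in_kset L k1 s1 -> in_kset L k1 s2 -> plegma_pair k1 s1 s2 ->
       plegma_linked k2 (phi s1) (phi s2)).
Proof.
move=> k1_gt0 lt_k12 /infinite_set_enum [x [Lx x_incr]] phi_k linked.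
have x_mono := homo_ltn ltn_trans x_incr.
pose u0 := mkseq (x \o fun i => i * k1.+1) k1.
pose K := nth 0 (phi u0) k1.
pose u m r := mkseq (x \o fun i => plegma_pos k1 K.+1 r i m) k1.
have u0E m : u m 0 = u0.
  rewrite /u /u0 /mkseq.
  by apply/eq_in_map => i; rewrite mem_iota /= /plegma_pos !addn0 => ->.
have uL m r : m < K.+1 -> r <= k1 -> in_kset L k1 (u m r).
  by move=> ltm ltr; apply: in_kset_mkseq => // i; apply: plegma_pos_ltS.
have u_step m r : m < K.+1 -> r < k1 -> plegma_pair k1 (u m r) (u m r.+1).
  move=> ltm ltr; apply: plegma_pair_mkseq => // i.
    exact: plegma_pos_lt_succ.
  exact: plegma_pos_succ_lt.
have u_top m m' : m < m' < K.+1 -> plegma_pair k1 (u m k1) (u m' k1).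
  move=> /andP [lt_mm' lt_m']; apply: plegma_pair_mkseq => // i.
    by move=> _; apply: plegma_pos_top_lt.
  exact: plegma_pos_top_ltS.
pose f m := nth 0 (phi (u m k1)) 0.
have f_lt m : m < K.+1 -> f m < K.
  move=> ltm; suff le_K : f m + k1 <= K.
    by apply: leq_trans le_K; rewrite -addn1 leq_add2l.
  have := @plegma_linked_descent k2 (fun r => phi (u m r)) k1 k1.
  rewrite subnn /= u0E; apply=> // r ltr.
  split; first by apply: phi_k; apply: uL => //; exact: ltnW.
  by apply: linked; [apply: uL => //; exact: ltnW | apply: uL | apply: u_step].
suff: K.+1 <= K by rewrite ltnn.
apply: (injective_bounded_leq (f := f)) f_lt => m m' lt_mmN.
have /andP [lt_mm' lt_m'] := lt_mmN; have lt_m := ltn_trans lt_mm' lt_m'.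
apply: plegma_linked_head_neq (ltn_trans k1_gt0 lt_k12) _.
by apply: linked; [apply: uL | apply: uL | apply: u_top].
Qed.

Lemma plegma_images_unlinked k1 k2 (M : nat -> Prop) (phi : seq nat -> seq nat) :
  0 < k1 -> k1 < k2 -> infinite_set M ->
  (forall s, in_kset M k1 s -> in_kset (fun _ => True) k2 (phi s)) ->
  exists L, [/\ subset_of L M, infinite_set L &
    forall s1 s2, in_kset L k1 s1 -> in_kset L k1 s2 -> plegma_pair k1 s1 s2 ->
      ~ plegma_linked k2 (phi s1) (phi s2)].
Proof.
move=> k1_gt0 lt_k12 infM phi_k.
pose c u := plegma_linked k2 (phi (evens k1 u)) (phi (odds k1 u)).
have [L [b [LM infL hom]]] := ramsey k1.*2 c infM.
have interleaveP s1 s2 : in_kset L k1 s1 -> in_kset L k1 s2 -> plegma_pair k1 s1 s2 ->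
    (plegma_linked k2 (phi s1) (phi s2) <-> b).
  move=> s1L s2L pl; have := hom _ (interleave_in_kset s1L s2L pl).
  by rewrite /c evens_interleave ?odds_interleave //; [case: s2L | case: s1L].
case: b {hom} interleaveP => interleaveP.
  case: (not_all_plegma_linked k1_gt0 lt_k12 infL (fun s sL => phi_k s (in_kset_sub LM sL))).
  by move=> s1 s2 s1L s2L pl; apply/(interleaveP _ _ s1L s2L pl).
by exists L; split=> // s1 s2 s1L s2L pl /(interleaveP _ _ s1L s2L pl).
Qed.

Theorem mainTheorem3 (k1 k2 : nat) (M : nat -> Prop)
    (phi : seq nat -> seq nat) :
  0 < k1 -> k1 < k2 -> infinite_set M ->
  (forall s, in_kset M k1 s -> in_kset (fun _ => True) k2 (phi s)) ->
  (exists L : nat -> Prop,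
      [/\ subset_of L M, infinite_set L &
        forall s1 s2, in_kset L k1 s1 -> in_kset L k1 s2 ->
          plegma_pair k1 s1 s2 ->
          ~ plegma_pair k2 (phi s1) (phi s2) /\
          ~ plegma_pair k2 (phi s2) (phi s1)])
  /\
  ~ (exists L : nat -> Prop,
      [/\ subset_of L M, infinite_set L &
        forall F : seq (seq nat),
          (forall s, s \in F -> in_kset L k1 s) ->
          plegma_family k1 F -> plegma_family k2 (map phi F)]).
Proof.
move=> k1_gt0 lt_k12 infM phi_k; split.
  have [L [LM infL unlinked]] := plegma_images_unlinked k1_gt0 lt_k12 infM phi_k.
  exists L; split=> // s1 s2 s1L s2L pl.
  by split=> pl'; apply: (unlinked s1 s2) => //; [left | right].
case=> L [LM infL families].
have phi_kL s : in_kset L k1 s -> in_kset (fun _ => True) k2 (phi s).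
  by move=> sL; apply/phi_k/(in_kset_sub LM).
have [L' [L'L infL' unlinked]] := plegma_images_unlinked k1_gt0 lt_k12 infL phi_kL.
have [s1 [s2 [s1L' s2L' pl]]] := exists_plegma_pair k1 infL'.
apply: (unlinked s1 s2 s1L' s2L' pl); left.
apply: (families [:: s1; s2]) => // s; rewrite !inE => /orP [] /eqP ->;
  exact: in_kset_sub L'L _.
Qed.
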